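(* Let $p\geq 2$ be an integer, $r=\lceil\log_2(p-1)\rceil$, and $m\geq 2r+2$. Let $b,c\geq 1$ be integers with $b+c\leq r+1$. Then the number of columns $v\in\{0,1,2\}^m$ for which there are sets $I,J\subseteq[m]$ with $|I|=c$, $|J|=b$, $\max I<\min J$, such that the set of marks of $v$ is exactly $I\times J$ and every pair in $I\times J$ is scarce, is at most $2^r(r-b-c+1)+2^{b+c-2}\leq r2^r$.
   Context: For a column $v\in\{0,1,2\}^m$, a mark of $v$ is a pair $(i,j)$ with $1\leq i<j\leq m$, $v_i=0$ and $v_j=1$ (a 0 above a 1). A pair $(i,j)$ with $1\leq i<j\leq m$ is scarce if $2^{m-1+i-j}<p-1$. *)

From mathcomp Require Import all_boot.
Set Implicit Arguments. Unset Strict Implicit. Unset Printing Implicit Defensive.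

(* Rows are 0-indexed: row k of the paper (1 <= k <= m) is the ordinal k-1 : 'I_m.
   A column is v : {ffun 'I_m -> 'I_3}, i.e. an element of {0,1,2}^m. *)

Definition marks (m : nat) (v : {ffun 'I_m -> 'I_3}) : {set 'I_m * 'I_m} :=
  [set ij : 'I_m * 'I_m | [&& (ij.1 < ij.2)%N, val (v ij.1) == 0 & val (v ij.2) == 1]].

(* scarce pair: i<j and 2^(m-1+i-j) < p-1 (shift-invariant in 0/1-indexing) *)
Definition scarce (p m : nat) (i j : 'I_m) : bool :=
  (i < j)%N && (2 ^ (m.-1 + i - j) < p - 1)%N.

Definition rr (p : nat) : nat := up_log 2 (p - 1).

(* Let the marks of a counted column v be I x J and put x = max I, z = min J.
   All entries strictly between rows x and z are 2; among the 0/1 entries of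
   rows i <= x the 0s (which form I) lie below the 1s, and among those of rows
   j >= z the 1s (which form J) lie above the 0s.  Since |I| = c and |J| = b,
   the column is recovered from the set of rows outside [x, z] that carry no 2,
   so at most 2^(x + (m-1-z)) columns have corner (x, z).  Scarcity of (x, z)
   gives x + (m-1-z) < r, and |I| = c, |J| = b give x >= c-1 and
   m-1-z >= b-1; summing 2^(x+y) over this triangle yields exactly
   2^r (r-b-c+1) + 2^(b+c-2). *)

From mathcomp Require Import all_boot zify.
Set Implicit Arguments. Unset Strict Implicit. Unset Printing Implicit Defensive.

Lemma leq_card_bigcup (I T : finType) (P : pred I) (F : I -> {set T}) :
  #|\bigcup_(i | P i) F i| <= \sum_(i | P i) #|F i|.
Proof.
elim/big_rec2: _ => [|i n U _ leUn]; first by rewrite cards0.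
by rewrite (leq_trans (leq_card_setU _ _)) // leq_add2l.
Qed.

Lemma total_upper_sets_eq (T : finType) (le : rel T) (D A B : {set T}) :
  total le -> A \subset D -> B \subset D ->
  {in A & D, forall a d, le a d -> d \in A} ->
  {in B & D, forall b d, le b d -> d \in B} ->
  #|A| = #|B| -> A = B.
Proof.
move=> le_total sAD sBD upA upB eq_AB.
suff [sAB | sBA] : A \subset B \/ B \subset A.
- by apply/eqP; rewrite eqEcard sAB eq_AB leqnn.
- by apply/esym/eqP; rewrite eqEcard sBA eq_AB leqnn.
case: (boolP (A \subset B)) => [|/subsetPn [a aA aNB]]; [by left | right].
apply/subsetP => d dB; have aD := subsetP sAD a aA; have dD := subsetP sBD d dB.
case/orP: (le_total a d) => [/(upA a d aA dD) // | /(upB d a dB aD) aB].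
by rewrite aB in aNB.
Qed.

Lemma card_ord_ltn m k : k <= m -> #|[set i : 'I_m | i < k]| = k.
Proof.
move=> le_km; have widen_inj : injective (widen_ord le_km).
  by move=> i j /(congr1 val) eq_ij; apply: val_inj.
rewrite -[RHS](card_ord k) -cardsT -(card_imset _ widen_inj).
apply: eq_card => i; rewrite inE; apply/idP/imsetP => [lt_ik | [j _ ->]].
  by exists (Ordinal lt_ik); rewrite ?in_setT //; apply: val_inj.
exact: (ltn_ord j).
Qed.

Lemma sum_pow2_nat a b : a <= b -> \sum_(a <= k < b) 2 ^ k + 2 ^ a = 2 ^ b.
Proof.
move=> /subnK <-; elim: (b - a) => [|d IHd]; first by rewrite big_geq.
by rewrite big_nat_recr ?leq_addl //= addnAC IHd addSn expnS mul2n -addnn.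
Qed.

Lemma sum_pow2_triangle_nat q1 q2 n : q1 + q2 < n ->
  \sum_(q1 <= x < n - q2) \sum_(q2 <= y < n - x) 2 ^ (x + y)
  = 2 ^ n * (n - (q1 + q2) - 1) + 2 ^ (q1 + q2).
Proof.
move=> lt_qn.
have row x : x < n - q2 ->
    \sum_(q2 <= y < n - x) 2 ^ (x + y) + 2 ^ (x + q2) = 2 ^ n.
  move=> lt_x; under eq_bigr do rewrite expnD.
  rewrite -big_distrr /= expnD -mulnDr sum_pow2_nat; last by lia.
  by rewrite -expnD subnKC //; lia.
have col : \sum_(q1 <= x < n - q2) 2 ^ (x + q2) + 2 ^ (q1 + q2) = 2 ^ n.
  under eq_bigr do rewrite expnD.
  rewrite -big_distrl /= expnD -mulnDl sum_pow2_nat; last by lia.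
  by rewrite -expnD subnK //; lia.
have rows : \sum_(q1 <= x < n - q2) (\sum_(q2 <= y < n - x) 2 ^ (x + y) + 2 ^ (x + q2))
            = (n - q2 - q1) * 2 ^ n.
  by rewrite (eq_big_nat _ _ (fun x hx => row x (proj2 (andP hx)))) sum_nat_const_nat.
rewrite big_split /= (_ : n - q2 - q1 = (n - (q1 + q2) - 1).+1) ?mulSn in rows; last by lia.
lia.
Qed.

Lemma big_nat_ord_cond M a b (F : nat -> nat) : b <= M ->
  \sum_(a <= k < b) F k = \sum_(k < M) (if (a <= k) && (k < b) then F k else 0).
Proof.
move=> le_bM; rewrite big_geq_mkord (big_ord_widen_cond _ _ _ le_bM) big_mkcond.
by apply: eq_bigr => k _; rewrite andbC.
Qed.

Lemma sum_pow2_triangle M q1 q2 n : q1 + q2 < n -> n <= M ->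
  \sum_(x < M) \sum_(y < M) (if [&& q1 <= x, q2 <= y & x + y < n] then 2 ^ (x + y) else 0)
  = 2 ^ n * (n - (q1 + q2) - 1) + 2 ^ (q1 + q2).
Proof.
move=> lt_qn le_nM; rewrite -sum_pow2_triangle_nat // (big_nat_ord_cond (M := M)); last by lia.
apply: eq_bigr => x _; case: ifP => [/andP [le_q1x lt_x] | x_out].
  rewrite (big_nat_ord_cond (M := M)); last by lia.
  by apply: eq_bigr => y _; rewrite le_q1x /=; congr (if _ then _ else _); lia.
by rewrite big1 // => y _; case: ifP => //; lia.
Qed.

Lemma scarce_rect_bound r b c : 0 < b -> 0 < c -> b + c <= r + 1 ->
  2 ^ r * (r + 1 - (b + c)) + 2 ^ (b + c - 2) <= r * 2 ^ r.
Proof.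
move=> b_gt0 c_gt0 le_bcr.
have : 2 ^ (b + c - 2) <= 2 ^ r by rewrite leq_exp2l //; lia.
have : 0 < r by lia.
case: r le_bcr => // r le_bcr _; rewrite mulSn; nia.
Qed.

Section Columns.
Variable m : nat.
Implicit Types (v : {ffun 'I_m -> 'I_3}) (I J : {set 'I_m}) (i j x z : 'I_m).

Definition binrows v := [set i | val (v i) < 2].

Lemma notin_binrows v i : i \notin binrows v -> val (v i) = 2.
Proof. by rewrite inE; have := valP (v i); lia. Qed.

Definition rows_outside x z := [set i : 'I_m | (i < x) || (z < i)].

Lemma card_rows_outside x z : x < z -> #|rows_outside x z| = x + (m.-1 - z).
Proof.
move=> lt_xz.
have -> : rows_outside x z = [set i : 'I_m | i < x] :|: ~: [set i : 'I_m | i < z.+1].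
  by apply/setP => i; rewrite !inE -leqNgt.
rewrite cardsU.
have -> : [set i : 'I_m | i < x] :&: ~: [set i : 'I_m | i < z.+1] = set0.
  by apply/setP => i; rewrite !inE; lia.
have := cardsC [set i : 'I_m | i < z.+1]; have lt_zm := ltn_ord z.
by rewrite cards0 !card_ord_ltn ?card_ord // ?(ltnW (ltn_ord x)); lia.
Qed.

Definition rect_marks v I J x z :=
  [&& marks v == setX I J, x \in I, z \in J,
      [forall i in I, i <= x] & [forall j in J, z <= j]].

Section RectangleColumn.
Variables (v : {ffun 'I_m -> 'I_3}) (I J : {set 'I_m}) (x z : 'I_m).
Hypothesis rect : rect_marks v I J x z.

Lemma rect_marksE : marks v = setX I J. Proof. by case/and5P: rect => /eqP. Qed.
Lemma rect_memx : x \in I. Proof. by case/and5P: rect. Qed.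
Lemma rect_memz : z \in J. Proof. by case/and5P: rect. Qed.
Lemma rect_le_max i : i \in I -> i <= x.
Proof. by case/and5P: rect => _ _ _ /forall_inP/(_ i). Qed.
Lemma rect_ge_min j : j \in J -> z <= j.
Proof. by case/and5P: rect => _ _ _ _ /forall_inP/(_ j). Qed.

Lemma mem_rect_marks i j :
  ((i, j) \in setX I J) = [&& i < j, val (v i) == 0 & val (v j) == 1].
Proof. by rewrite -rect_marksE inE. Qed.

Lemma rect_lt : x < z.
Proof.
by have := mem_rect_marks x z; rewrite in_setX rect_memx rect_memz => /esym/and3P [].
Qed.

Lemma rect_zero i : i \in I -> val (v i) = 0.
Proof.
move=> iI; have := mem_rect_marks i z.
by rewrite in_setX iI rect_memz => /esym/and3P [_ /eqP].
Qed.

Lemma rect_one j : j \in J -> val (v j) = 1.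
Proof.
move=> jJ; have := mem_rect_marks x j.
by rewrite in_setX rect_memx jJ => /esym/and3P [_ _ /eqP].
Qed.

Lemma rect_memI i : val (v i) = 0 -> i < z -> i \in I.
Proof.
move=> vi lt_iz; have := mem_rect_marks i z.
by rewrite in_setX lt_iz vi rect_one ?rect_memz // => /andP [].
Qed.

Lemma rect_memJ j : val (v j) = 1 -> x < j -> j \in J.
Proof.
move=> vj lt_xj; have := mem_rect_marks x j.
by rewrite in_setX lt_xj vj rect_zero ?rect_memx // => /andP [].
Qed.

Lemma rect_off i :
  i \notin I -> i \notin J -> i \in binrows v -> val (v i) = if i < z then 1 else 0.
Proof.
move=> iNI iNJ; rewrite inE; have := rect_lt.
case vi: (val (v i)) => [|[|]] // lt_xz _.
- by rewrite (negbTE (contra (rect_memI vi) iNI)).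
- have le_ix : i <= x by rewrite leqNgt; apply: contra iNJ; apply: rect_memJ.
  by rewrite (leq_ltn_trans le_ix lt_xz).
Qed.

Lemma rect_gap i : x < i < z -> val (v i) = 2.
Proof.
move=> /andP [lt_xi lt_iz]; have := valP (v i).
case vi: (val (v i)) => [|[|[|n]]] //.
- by have := rect_le_max (rect_memI vi lt_iz); lia.
- by have := rect_ge_min (rect_memJ vi lt_xi); lia.
Qed.

Lemma rect_binrows_inside i :
  i \notin rows_outside x z -> (i \in binrows v) = (i == x) || (i == z).
Proof.
rewrite inE negb_or -!leqNgt => /andP [le_xi le_iz].
have [-> | ne_ix] := eqVneq i x; first by rewrite inE rect_zero ?rect_memx.
have [-> | ne_iz] := eqVneq i z; first by rewrite inE rect_one ?rect_memz.
rewrite inE rect_gap //; move: ne_ix ne_iz; rewrite -!val_eqE /=; lia.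
Qed.

Lemma rect_card_I : #|I| <= x.+1.
Proof.
rewrite -(card_ord_ltn (ltn_ord x)); apply: subset_leq_card.
by apply/subsetP => i /rect_le_max; rewrite inE ltnS.
Qed.

Lemma rect_card_J : #|J| <= m - z.
Proof.
have sub_J : J \subset ~: [set j : 'I_m | j < z].
  by apply/subsetP => j /rect_ge_min; rewrite !inE -leqNgt.
apply: (leq_trans (subset_leq_card sub_J)).
by rewrite cardsCs setCK card_ord card_ord_ltn // ltnW.
Qed.

Lemma rect_sub_I : I \subset [set i in binrows v | i <= x].
Proof. by apply/subsetP => i iI; rewrite !inE rect_zero ?rect_le_max. Qed.

Lemma rect_sub_J : J \subset [set j in binrows v | z <= j].
Proof. by apply/subsetP => j jJ; rewrite !inE rect_one ?rect_ge_min. Qed.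

Lemma rect_upper_I :
  {in I & [set i in binrows v | i <= x], forall i i', i <= i' -> i' \in I}.
Proof.
move=> i i' iI; rewrite !inE => /andP [bin_i' le_i'x] le_ii'.
have lt_xz := rect_lt.
case vi': (val (v i')) bin_i' => [|[|]] // _; first by apply: rect_memI; lia.
have lt_ii' : i < i'.
  rewrite ltn_neqAle le_ii' andbT; apply/eqP => /val_inj eq_ii'.
  by move: vi'; rewrite -eq_ii' rect_zero.
have : (i, i') \in setX I J by rewrite mem_rect_marks lt_ii' rect_zero ?vi'.
by rewrite in_setX => /andP [_ /rect_ge_min]; lia.
Qed.

Lemma rect_lower_J :
  {in J & [set j in binrows v | z <= j], forall j j', j' <= j -> j' \in J}.
Proof.
move=> j j' jJ; rewrite !inE => /andP [bin_j' le_zj'] le_j'j.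
have lt_xz := rect_lt.
case vj': (val (v j')) bin_j' => [|[|]] // _; last by apply: rect_memJ; lia.
have lt_j'j : j' < j.
  rewrite ltn_neqAle le_j'j andbT; apply/eqP => /val_inj eq_j'j.
  by move: vj'; rewrite eq_j'j rect_one.
have : (j', j) \in setX I J by rewrite mem_rect_marks lt_j'j vj' rect_one.
by rewrite in_setX => /andP [/rect_le_max]; lia.
Qed.

End RectangleColumn.

Lemma rect_col_eq v v' I J I' J' x z :
  rect_marks v I J x z -> rect_marks v' I' J' x z -> #|I| = #|I'| -> #|J| = #|J'| ->
  binrows v :&: rows_outside x z = binrows v' :&: rows_outside x z -> v = v'.
Proof.
move=> rv rv' cI cJ eq_out.
have eq_bin : binrows v = binrows v'.
  apply/setP => i; have [out | inside] := boolP (i \in rows_outside x z).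
    by move/setP/(_ i): eq_out; rewrite !in_setI out !andbT.
  by rewrite (rect_binrows_inside rv) ?(rect_binrows_inside rv').
have eqI : I = I'.
  apply: (total_upper_sets_eq (fun i j => leq_total i j) (rect_sub_I rv)) cI.
  - by rewrite eq_bin; apply: rect_sub_I rv'.
  - exact: rect_upper_I rv.
  - by rewrite eq_bin; apply: rect_upper_I rv'.
have eqJ : J = J'.
  apply: (total_upper_sets_eq (fun i j => leq_total j i) (rect_sub_J rv)) cJ.
  - by rewrite eq_bin; apply: rect_sub_J rv'.
  - exact: rect_lower_J rv.
  - by rewrite eq_bin; apply: rect_lower_J rv'.
subst I' J'; apply/ffunP => i; apply: val_inj.
have [iI | iNI] := boolP (i \in I); first by rewrite (rect_zero rv iI) (rect_zero rv' iI).
have [iJ | iNJ] := boolP (i \in J); first by rewrite (rect_one rv iJ) (rect_one rv' iJ).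
have [bin | nbin] := boolP (i \in binrows v).
  by rewrite (rect_off rv) // (rect_off rv') // -eq_bin.
by rewrite !notin_binrows // -eq_bin.
Qed.

Definition rect_cols c b x z :=
  [set v : {ffun 'I_m -> 'I_3} | [exists I : {set 'I_m}, exists J : {set 'I_m},
    [&& #|I| == c, #|J| == b & rect_marks v I J x z]]].

Lemma rect_colsP c b x z v :
  reflect (exists I J, [/\ #|I| = c, #|J| = b & rect_marks v I J x z])
          (v \in rect_cols c b x z).
Proof.
rewrite inE; apply: (iffP existsP).
  by case=> I /existsP [J /and3P [/eqP cI /eqP cJ rv]]; exists I, J.
case=> I [J [cI cJ rv]].
by exists I; apply/existsP; exists J; rewrite cI cJ !eqxx.
Qed.

Lemma card_rect_cols c b x z : #|rect_cols c b x z| <= 2 ^ (x + (m.-1 - z)).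
Proof.
have [-> | [v0 /rect_colsP [I0 [J0 [_ _ rv0]]]]] := set_0Vmem (rect_cols c b x z).
  by rewrite cards0.
pose f v := binrows v :&: rows_outside x z.
have f_inj : {in rect_cols c b x z &, injective f}.
  move=> v v' /rect_colsP [I [J [cI cJ rv]]] /rect_colsP [I' [J' [cI' cJ' rv']]].
  by apply: rect_col_eq rv rv' _ _; rewrite ?cI ?cI' ?cJ ?cJ'.
rewrite -(card_in_imset f_inj) -(card_rows_outside (rect_lt rv0)) -card_powerset.
by apply: subset_leq_card; apply/subsetP => _ /imsetP [v _ ->]; rewrite powersetE subsetIr.
Qed.

End Columns.

Lemma scarce_lt_rr p m (i j : 'I_m) : scarce p i j -> i + (m.-1 - j) < rr p.
Proof.
case/andP => lt_ij lt_p; rewrite -(ltn_exp2l _ _ (ltnSn 1)).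
apply: leq_trans (up_logP (p - 1) (ltnSn 1)).
have -> : i + (m.-1 - j) = m.-1 + i - j by have := ltn_ord j; lia.
exact: lt_p.
Qed.

Lemma rect_marks_corner m (v : {ffun 'I_m -> 'I_3}) (I J : {set 'I_m}) :
  marks v = setX I J -> 0 < #|I| -> 0 < #|J| -> exists x z, rect_marks v I J x z.
Proof.
move=> marksE /card_gt0P [i0 i0I] /card_gt0P [j0 j0J].
case: (arg_maxnP val i0I) => x xI le_Ix; case: (arg_minnP val j0J) => z zJ ge_Jz.
exists x, z; apply/and5P; split; rewrite ?marksE //.
  by apply/forall_inP => i iI; apply: le_Ix.
by apply/forall_inP => j jJ; apply: ge_Jz.
Qed.

Definition scarce_rect_cols p m c b :=
  [set v : {ffun 'I_m -> 'I_3} |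
     [exists I : {set 'I_m}, exists J : {set 'I_m},
        [&& #|I| == c, #|J| == b,
            [forall i in I, forall j in J, (i < j)%N],
            marks v == setX I J &
            [forall i in I, forall j in J, scarce p i j]]]].

Section ScarceRectangles.
Variables p m c b : nat.
Local Notation S := (scarce_rect_cols p m c b).

Lemma scarce_rect_cols_cover : 0 < c -> 0 < b ->
  S \subset \bigcup_(xz : 'I_m * 'I_m) (S :&: rect_cols c b xz.1 xz.2).
Proof.
move=> c_gt0 b_gt0; apply/subsetP => v vS; move: (vS).
rewrite inE => /existsP [I /existsP [J /and5P [/eqP cI /eqP cJ _ /eqP marksE _]]].
have [x [z rv]] : exists x z, rect_marks v I J x z.
  by apply: rect_marks_corner marksE _ _; rewrite ?cI ?cJ.
by apply/bigcupP; exists (x, z) => //; rewrite inE vS; apply/rect_colsP; exists I, J.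
Qed.

Lemma scarce_rect_corner x z v :
  v \in S -> v \in rect_cols c b x z -> x + (m.-1 - z) < rr p.
Proof.
rewrite inE => /existsP [I /existsP [J /and5P [_ _ _ /eqP marksE scIJ]]].
case/rect_colsP => I' [J' [_ _ rv]].
have : (x, z) \in setX I J.
  by rewrite -marksE (rect_marksE rv) in_setX (rect_memx rv) (rect_memz rv).
rewrite in_setX => /andP [xI zJ]; apply: scarce_lt_rr.
by move/forall_inP/(_ x xI)/forall_inP/(_ z zJ): scIJ.
Qed.

Lemma card_scarce_rect_corner x z :
  #|S :&: rect_cols c b x z|
    <= if [&& c.-1 <= x, b.-1 <= m.-1 - z & x + (m.-1 - z) < rr p]
       then 2 ^ (x + (m.-1 - z)) else 0.
Proof.
have [-> | [v /setIP [vS vR]]] := set_0Vmem (S :&: rect_cols c b x z).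
  by rewrite cards0.
case/rect_colsP: (vR) => I [J [cI cJ rv]].
have -> : c.-1 <= x by rewrite -cI; have := rect_card_I rv; lia.
have -> : b.-1 <= m.-1 - z by rewrite -cJ; have := rect_card_J rv; lia.
rewrite (scarce_rect_corner vS vR) /=.
apply: leq_trans (card_rect_cols c b x z); apply: subset_leq_card; exact: subsetIr.
Qed.

Lemma card_scarce_rect_cols : 0 < c -> 0 < b -> b + c <= rr p + 1 -> rr p <= m ->
  #|S| <= 2 ^ rr p * (rr p + 1 - (b + c)) + 2 ^ (b + c - 2).
Proof.
move=> c_gt0 b_gt0 le_bcr le_rm.
apply: (leq_trans (subset_leq_card (scarce_rect_cols_cover c_gt0 b_gt0))).
apply: (leq_trans (leq_card_bigcup _ _)).
have -> : \sum_(xz : 'I_m * 'I_m) #|S :&: rect_cols c b xz.1 xz.2|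
        = \sum_(x : 'I_m) \sum_(z : 'I_m) #|S :&: rect_cols c b x z|.
  by rewrite pair_bigA.
apply: leq_trans.
  by apply: leq_sum => x _; apply: leq_sum => z _; apply: card_scarce_rect_corner.
have -> : rr p + 1 - (b + c) = rr p - (c.-1 + b.-1) - 1 by lia.
have -> : b + c - 2 = c.-1 + b.-1 by lia.
rewrite -(sum_pow2_triangle (M := m)); [apply: eq_leq | lia | lia].
apply: eq_bigr => x _; rewrite (reindex_inj rev_ord_inj) /=.
by apply: eq_bigr => y _; have -> : m.-1 - (m - y.+1) = y by have := ltn_ord y; lia.
Qed.

End ScarceRectangles.

Theorem mainTheorem8 (p m b c : nat) :
  (2 <= p)%N -> (2 * rr p + 2 <= m)%N -> (1 <= b)%N -> (1 <= c)%N ->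
  (b + c <= rr p + 1)%N ->
  let N := #|[set v : {ffun 'I_m -> 'I_3} |
               [exists I : {set 'I_m}, exists J : {set 'I_m},
                  [&& #|I| == c, #|J| == b,
                      [forall i in I, forall j in J, (i < j)%N],
                      marks v == setX I J &
                      [forall i in I, forall j in J, scarce p i j]]]]| in
  (N <= 2 ^ rr p * (rr p + 1 - (b + c)) + 2 ^ (b + c - 2))%N /\
  (2 ^ rr p * (rr p + 1 - (b + c)) + 2 ^ (b + c - 2) <= rr p * 2 ^ rr p)%N.
Proof.
move=> _ le_rm b_gt0 c_gt0 le_bcr N; split; last exact: scarce_rect_bound.
by apply: card_scarce_rect_cols => //; lia.
Qed.
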